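(* Let $f$, $c_f$ be as in the context and let $(\bar u_k)$ be generated by $\bar u_{k+1}=\bar u_k+\operatorname{argmin}_{\bar v}\{c_f(\bar u_k+\bar v;\bar u_k)+\frac{1}{2\gamma_k}\|\bar v\|_2^2\}$ from $\bar u_0$. Let $S=\{\bar u:f(\bar u)\le f(\bar u_0)\}$, let $\ell_{f,S}$ be the Lipschitz constant of $f$ on $S$, let $C=S+B_1$ where $B_1$ is the closed unit Euclidean ball centered at $0$, and let $M_C>0$ be such that $|f(\bar v)-c_f(\bar v;\bar u)|\le\frac{M_C}{2}\|\bar v-\bar u\|_2^2$ for all $\bar u,\bar v\in C$. Then for any $k$ with $\bar u_k\in S$, any step size $$\gamma_k\le\hat\gamma=\min\{\ell_{f,S}^{-1},M_C^{-1}\}$$ ensures the sufficient decrease condition $f(\bar u_{k+1})\le c_f(\bar u_{k+1};\bar u_k)+\frac{1}{2\gamma_k}\|\bar u_{k+1}-\bar u_k\|_2^2$.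
   Context: Let $h:\mathbb{R}^{\tau d}\to\mathbb{R}$ and $g:\mathbb{R}^{\tau p}\to\mathbb{R}$ be convex quadratic functions, $\tilde x:\mathbb{R}^{\tau p}\to\mathbb{R}^{\tau d}$ differentiable with continuous gradients, and $f(\bar u)=h(\tilde x(\bar u))+g(\bar u)$. For differentiable $F:\mathbb{R}^n\to\mathbb{R}^m$, $\nabla F(z)\in\mathbb{R}^{n\times m}$ is the transposed Jacobian. The convex model is $c_f(\bar u+\bar v;\bar u)=h(\tilde x(\bar u)+\nabla\tilde x(\bar u)^\top\bar v)+g(\bar u+\bar v)$. *)

(* Row vectors 'rV[R]_n model R^n. *)
From HB Require Import structures.
From mathcomp Require Import all_boot all_order all_algebra.
From mathcomp Require Import all_classical all_reals all_analysis.
Set Implicit Arguments. Unset Strict Implicit. Unset Printing Implicit Defensive.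
Import Order.TTheory GRing.Theory Num.Theory.
Import numFieldNormedType.Exports.
Local Open Scope ring_scope.

Section Defs.
Variable R : realType.

(* squared Euclidean norm and Euclidean norm (the library norm on 'rV is the max norm) *)
Definition sqnorm2 n (v : 'rV[R]_n) : R := \sum_(i < n) v 0 i ^+ 2.
Definition norm2 n (v : 'rV[R]_n) : R := Num.sqrt (sqnorm2 v).

Definition convex_quadratic n (q : 'rV[R]_n -> R) : Prop :=
  exists (Q : 'M[R]_n) (b : 'rV[R]_n) (c : R),
    Q^T = Q /\ (forall x : 'rV[R]_n, 0 <= (x *m Q *m x^T) 0 0) /\
    forall x, q x = 2^-1 * (x *m Q *m x^T) 0 0 + (x *m b^T) 0 0 + c.

(* transposed Jacobian: grad F u  i j = d F_j / d u_i  (an n x m matrix) *)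
Definition grad n m (F : 'rV[R]_n -> 'rV[R]_m) (u : 'rV[R]_n) : 'M[R]_(n, m) :=
  \matrix_(i < n, j < m) ('D_(delta_mx 0 i) F u) 0 j.

(* the convex model c_f(u + v; u) = h(x(u) + grad x(u)^T v) + g(u + v),
   written with w = u + v as first argument *)
Definition cmodel n m (h : 'rV[R]_m -> R) (g : 'rV[R]_n -> R)
  (xt : 'rV[R]_n -> 'rV[R]_m) (w u : 'rV[R]_n) : R :=
  h (xt u + (w - u) *m grad xt u) + g w.

Definition euclid_lipschitz_on n (f : 'rV[R]_n -> R) (S : set 'rV[R]_n) (l : R) : Prop :=
  forall x y, S x -> S y -> `|f x - f y| <= l * norm2 (x - y).

Definition add_unit_ball n (S : set 'rV[R]_n) : set 'rV[R]_n :=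
  fun x => exists s w, S s /\ norm2 w <= 1 /\ x = s + w.

Definition fobj n m (h : 'rV[R]_m -> R) (g : 'rV[R]_n -> R)
  (xt : 'rV[R]_n -> 'rV[R]_m) (u : 'rV[R]_n) : R := h (xt u) + g u.

Definition sublevel n (f : 'rV[R]_n -> R) (a : R) : set 'rV[R]_n :=
  fun u => f u <= a.

End Defs.

(* Write d = y - x for the proximal step from x and r for its Euclidean norm.
   Comparing y with x + (1 - s) d, optimality of y and convexity of the model
   give f x - c y x >= (2 - s) r^2 / (2 gamma).  If s r <= 1, the point x + s d
   lies in C, and the model error bound there, together with the Lipschitz bound
   on S (or f > f x outside S), gives f x - c y x <= l r + M s r^2 / 2.  Since
   gamma l <= 1 and gamma M <= 1 this forces (1 - s) r <= 1 for every such s,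
   hence r <= 1.  So y lies in C too, and the model error bound at y is the
   sufficient decrease because M / 2 <= 1 / (2 gamma). *)

From HB Require Import structures.
From mathcomp Require Import all_boot all_order all_algebra.
From mathcomp Require Import all_classical all_reals all_analysis.
From mathcomp Require Import ring lra.
Set Implicit Arguments. Unset Strict Implicit. Unset Printing Implicit Defensive.
Import Order.TTheory GRing.Theory Num.Theory.
Import numFieldNormedType.Exports.
Local Open Scope ring_scope.

Section EuclideanNorm.
Variables (R : realType) (n : nat).
Implicit Types (v w x : 'rV[R]_n) (S : set 'rV[R]_n).

Lemma sqnorm2_ge0 v : 0 <= sqnorm2 v.
Proof. by apply: sumr_ge0 => i _; apply: sqr_ge0. Qed.

Lemma sqnorm2Z (s : R) v : sqnorm2 (s *: v) = s ^+ 2 * sqnorm2 v.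
Proof. by rewrite /sqnorm2 mulr_sumr; apply: eq_bigr => i _; rewrite mxE exprMn. Qed.

Lemma norm2_ge0 v : 0 <= norm2 v.
Proof. exact: sqrtr_ge0. Qed.

Lemma sqr_norm2 v : norm2 v ^+ 2 = sqnorm2 v.
Proof. by rewrite sqr_sqrtr // sqnorm2_ge0. Qed.

Lemma norm2Z (s : R) v : 0 <= s -> norm2 (s *: v) = s * norm2 v.
Proof. by move=> s0; rewrite /norm2 sqnorm2Z sqrtrM ?sqr_ge0 // sqrtr_sqr ger0_norm. Qed.

Lemma norm20 : norm2 (0 : 'rV[R]_n) = 0.
Proof. by rewrite /norm2 /sqnorm2 big1 ?sqrtr0 // => i _; rewrite mxE expr0n. Qed.

Lemma add_unit_ballD S x w : S x -> norm2 w <= 1 -> add_unit_ball S (x + w).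
Proof. by move=> Sx w1; exists x, w. Qed.

Lemma sub_add_unit_ball S x : S x -> add_unit_ball S x.
Proof. by move=> Sx; rewrite -[x]addr0; apply: add_unit_ballD; rewrite ?norm20. Qed.

End EuclideanNorm.

Lemma convex_quadraticP (R : realType) n (q : 'rV[R]_n -> R) (x e : 'rV[R]_n) (s : R) :
  convex_quadratic q -> 0 <= s <= 1 ->
  q (x + s *: e) <= (1 - s) * q x + s * q (x + e).
Proof.
move=> [Q [b [c [_ [Qpsd qE]]]]] /andP[s0 s1].
have eQe_ge0 := Qpsd e.
rewrite !qE !(linearD, linearZ) /= !(mulmxDl, mulmxDr) -!(scalemxAl, scalemxAr).
move: eQe_ge0 (x *m Q *m x^T) (x *m Q *m e^T) (e *m Q *m x^T) (x *m b^T) (e *m b^T).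
move: (e *m Q *m e^T) => eQe eQe_ge0 xQx xQe eQx xb eb; rewrite !mxE.
(* the convexity gap is (s - s^2) / 2 times e Q e^T *)
have : 0 <= (s - s ^+ 2) * eQe 0 0 by apply: mulr_ge0 => //; nra.
nra.
Qed.

Lemma le1_of_shrunk_le1 (R : realFieldType) (r : R) :
  (forall s, 0 < s <= 1 -> s * r <= 1 -> (1 - s) * r <= 1) -> r <= 1.
Proof.
move=> shrunk; rewrite leNgt; apply/negP => r_gt1.
have r_gt0 : 0 < r by apply: lt_trans r_gt1.
(* small enough that s r < 1/2, yet (1 - s) r > 1 *)
pose s := (r - 1) / (2 * r ^+ 2).
have sE : s * (2 * r ^+ 2) = r - 1 by rewrite mulfVK // mulf_neq0 ?expf_neq0 // gt_eqF.
have s_gt0 : 0 < s by nra.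
have s_le1 : s <= 1 by nra.
have sr_le1 : s * r <= 1 by nra.
have := shrunk s; rewrite s_gt0 s_le1 => /(_ isT sr_le1); nra.
Qed.

Lemma lipschitz_sublevel_lb (R : realType) n (f : 'rV[R]_n -> R) (a l : R) x z :
  euclid_lipschitz_on f (sublevel f a) l -> 0 <= l -> sublevel f a x ->
  f x - l * norm2 (z - x) <= f z.
Proof.
move=> f_lip l_ge0 Sx; have lz_ge0 := mulr_ge0 l_ge0 (norm2_ge0 (z - x)).
have [Sz | notSz] := boolP (f z <= a); last by rewrite /sublevel in Sx; lra.
by have := f_lip _ _ Sz Sx; rewrite ler_norml => /andP[+ _]; lra.
Qed.

Section ProximalStep.
Variables (R : realType) (n m : nat).
Variables (h : 'rV[R]_m -> R) (g : 'rV[R]_n -> R) (xt : 'rV[R]_n -> 'rV[R]_m).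
Hypotheses (hq : convex_quadratic h) (gq : convex_quadratic g).
Local Notation f := (fobj h g xt).
Local Notation c := (cmodel h g xt).

Lemma cmodel_self x : c x x = f x.
Proof. by rewrite /cmodel /fobj subrr mul0mx addr0. Qed.

Lemma cmodel_convex x d (s : R) : 0 <= s <= 1 ->
  c (x + s *: d) x <= (1 - s) * f x + s * c (x + d) x.
Proof.
move=> s01; rewrite /cmodel /fobj !(addrC x) !addrK -scalemxAl.
have := convex_quadraticP (xt x) (d *m grad xt x) hq s01.
have := convex_quadraticP x d gq s01.
rewrite !(addrC x); lra.
Qed.

Variables (x y : 'rV[R]_n) (gamma : R).
Hypothesis gamma_gt0 : 0 < gamma.
Hypothesis y_prox : forall v, c y x + (2 * gamma)^-1 * sqnorm2 (y - x)
                              <= c (x + v) x + (2 * gamma)^-1 * sqnorm2 v.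

Lemma prox_model_decrease s : 0 < s <= 1 ->
  (2 - s) * (2 * gamma)^-1 * sqnorm2 (y - x) <= f x - c y x.
Proof.
move=> /andP[s_gt0 s_le1].
have s01 : 0 <= 1 - s <= 1 by apply/andP; split; lra.
have := y_prox ((1 - s) *: (y - x)); rewrite sqnorm2Z => prox_opt.
have := cmodel_convex x (y - x) s01; rewrite subrKC => model_conv.
by rewrite -(ler_pM2l s_gt0); nra.
Qed.

Variables (a l M : R).
Local Notation S := (sublevel f a).
Hypotheses (Sx : S x) (l_ge0 : 0 <= l) (f_lip : euclid_lipschitz_on f S l).
Hypothesis M_bound : forall w v, add_unit_ball S w -> add_unit_ball S v ->
  `|f v - c v w| <= M / 2 * sqnorm2 (v - w).

Lemma model_gap_le s : 0 < s <= 1 -> s * norm2 (y - x) <= 1 ->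
  f x - c y x <= l * norm2 (y - x) + M / 2 * s * sqnorm2 (y - x).
Proof.
move=> /andP[s_gt0 s_le1] sr_le1; have s_ge0 := ltW s_gt0.
have s01 : 0 <= s <= 1 by rewrite s_ge0.
have shiftE : x + s *: (y - x) - x = s *: (y - x) by rewrite addrAC subrr add0r.
have Cs : add_unit_ball S (x + s *: (y - x)).
  by apply: add_unit_ballD => //; rewrite norm2Z.
have := M_bound (sub_add_unit_ball Sx) Cs.
rewrite shiftE sqnorm2Z ler_norml => /andP[_ model_err].
have := lipschitz_sublevel_lb (x + s *: (y - x)) f_lip l_ge0 Sx.
rewrite shiftE norm2Z // => lip_lb.
have := cmodel_convex x (y - x) s01; rewrite subrKC => model_conv.
by rewrite -(ler_pM2l s_gt0); lra.
Qed.

Hypotheses (gamma_l : gamma * l <= 1) (gamma_M : gamma * M <= 1).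

Lemma norm2_prox_step_le1 : norm2 (y - x) <= 1.
Proof.
apply: le1_of_shrunk_le1 => s s01 sr_le1.
have := le_trans (prox_model_decrease s01) (model_gap_le s01 sr_le1).
rewrite -sqr_norm2; have r_ge0 := norm2_ge0 (y - x).
set r := norm2 (y - x) in sr_le1 r_ge0 * => gap.
have gamma2_gt0 : 0 < 2 * gamma by rewrite mulr_gt0.
rewrite -(ler_pM2l gamma2_gt0) in gap.
have lr_le : gamma * l * r <= r by rewrite -[leRHS]mul1r ler_wpM2r.
have Mr_le : gamma * M * (s * r ^+ 2) <= s * r ^+ 2.
  by rewrite -[leRHS]mul1r ler_wpM2r // mulr_ge0 ?sqr_ge0 // ltW; case/andP: s01.
have shrink : (1 - s) * r ^+ 2 <= r.
  have E : 2 * gamma * ((2 - s) / (2 * gamma) * r ^+ 2) = (2 - s) * r ^+ 2.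
    by field; rewrite gt_eqF.
  lra.
have [r_gt0 | r_le0] := ltrP 0 r; last by nra.
by rewrite -(ler_pM2r r_gt0) mul1r -mulrA -expr2.
Qed.

Lemma prox_sufficient_decrease : f y <= c y x + (2 * gamma)^-1 * sqnorm2 (y - x).
Proof.
have Cy : add_unit_ball S y.
  by rewrite -(subrKC x y); apply: add_unit_ballD => //; apply: norm2_prox_step_le1.
have := M_bound (sub_add_unit_ball Sx) Cy; rewrite ler_norml => /andP[_ model_err].
have M_le : M / 2 <= (2 * gamma)^-1.
  rewrite -subr_ge0 (_ : _ - _ = (1 - gamma * M) / (2 * gamma)).
    by rewrite divr_ge0 ?subr_ge0 // mulr_ge0 // ltW.
  by field; rewrite gt_eqF.
have := ler_wpM2r (sqnorm2_ge0 (y - x)) M_le; lra.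
Qed.
End ProximalStep.

Theorem lemma3 (R : realType) (n m : nat)
  (h : 'rV[R]_m -> R) (g : 'rV[R]_n -> R) (xt : 'rV[R]_n -> 'rV[R]_m)
  (hq : convex_quadratic h) (gq : convex_quadratic g)
  (xt_diff : forall u, differentiable xt u)
  (xt_grad_cont : forall i j, continuous (fun u => grad xt u i j))
  (u : nat -> 'rV[R]_n) (gamma : nat -> R)
  (gamma_pos : forall k, 0 < gamma k)
  (u_step : forall k (v : 'rV[R]_n),
     cmodel h g xt (u k.+1) (u k) + (2 * gamma k)^-1 * sqnorm2 (u k.+1 - u k)
     <= cmodel h g xt (u k + v) (u k) + (2 * gamma k)^-1 * sqnorm2 v)
  (l M : R) (l_pos : 0 < l) (M_pos : 0 < M)
  (l_lip : euclid_lipschitz_on (fobj h g xt) (sublevel (fobj h g xt) (fobj h g xt (u 0%N))) l)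
  (M_bound : forall w v : 'rV[R]_n,
     add_unit_ball (sublevel (fobj h g xt) (fobj h g xt (u 0%N))) w ->
     add_unit_ball (sublevel (fobj h g xt) (fobj h g xt (u 0%N))) v ->
     `|fobj h g xt v - cmodel h g xt v w| <= M / 2 * sqnorm2 (v - w))
  (k : nat)
  (uk_S : sublevel (fobj h g xt) (fobj h g xt (u 0%N)) (u k))
  (gamma_le : gamma k <= Num.min l^-1 M^-1) :
  fobj h g xt (u k.+1)
    <= cmodel h g xt (u k.+1) (u k) + (2 * gamma k)^-1 * sqnorm2 (u k.+1 - u k).
Proof.
have le_inv_mul (z w : R) : 0 < w -> z <= w^-1 -> z * w <= 1.
  by move=> w_gt0; rewrite -[w^-1]div1r ler_pdivlMr.
move: gamma_le; rewrite le_min => /andP[gamma_l gamma_M].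
exact: (prox_sufficient_decrease hq gq (gamma_pos k) (u_step k) uk_S (ltW l_pos)
  l_lip M_bound (le_inv_mul _ _ l_pos gamma_l) (le_inv_mul _ _ M_pos gamma_M)).
Qed.
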